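(* Let $L>0$, $V\in C^1([0,L];\mathbb{R})$ such that the only $x\in[0,L]$ with $V'(x)=0$ is $\mathbf{x}_0\in(0,L)$ and $V(\mathbf{x}_0)=\min_{[0,L]}V$. For $\varepsilon\in(0,1]$ let $q_\varepsilon\in C^1([0,L];\mathbb{R})$ with $q_\varepsilon\to0$ in $C^1([0,L])$, and $V_\varepsilon=V+q_\varepsilon$. Then for any family $(\lambda_\varepsilon)_{\varepsilon\in(0,1)}$ of real numbers with $\lambda_\varepsilon\to0$ as $\varepsilon\to0^+$ and any $\nu>0$, there are constants $C,\varepsilon_0>0$ such that for all $y\in[0,L]$, all $\varepsilon\in(0,\varepsilon_0]$, all $E\in\mathbb{R}$ and all $\psi$ satisfying $$-\varepsilon^2\psi''+V_\varepsilon\psi=E\psi,\qquad \psi\in H^2(0,L)\cap H^1_0(0,L),\qquad\|\psi\|_{L^2(0,L)}=1,$$ we have \begin{itemize} \item $\|\psi\|_{L^2(U)}\ge C$ with $U=(y-\nu,y+\nu)\cap[0,L]$, if $E\ge V(y)-\lambda_\varepsilon$; \item $\frac{\varepsilon}{\sqrt{|E|+1}}|\psi'(0)|\ge C$ if $E\ge V(0)+\nu$; \item $\frac{\varepsilon}{\sqrt{|E|+1}}|\psi'(L)|\ge C$ if $E\ge V(L)+\nu$. \end{itemize} *)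

From Stdlib Require Import Reals.
From Coquelicot Require Import Coquelicot.
Open Scope R_scope.

Definition cont_on_0L {V : UniformSpace} (L : R) (f : R -> V) : Prop :=
  forall x, 0 <= x <= L ->
    filterlim f (within (fun y => 0 <= y <= L) (locally x)) (locally (f x)).

(* f is C^1 on [0,L] with derivative df: f and df continuous on [0,L],
   f' = df on (0,L) (so df x at an endpoint is the one-sided derivative). *)
Definition C1_on (L : R) (f df : R -> R) : Prop :=
  cont_on_0L L f /\ cont_on_0L L df /\
  (forall x, 0 < x < L -> is_derive f x (df x)).

(* psi (complex valued) with psi' = dpsi is an H^2(0,L) \cap H^1_0(0,L) solution of
   -eps^2 psi'' + W psi = E psi with ||psi||_{L^2(0,L)} = 1.
   (An H^2 solution of this ODE with continuous W is classical in (0,L) and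
   C^1 up to the boundary; conversely such a function is in H^2.) *)
Definition dirichlet_eigenfunction (L eps : R) (W : R -> R) (E : R)
    (psi dpsi : R -> C) : Prop :=
  cont_on_0L L psi /\ cont_on_0L L dpsi /\
  (forall x, 0 < x < L -> is_derive psi x (dpsi x)) /\
  (forall x, 0 < x < L -> exists d2 : C,
      is_derive dpsi x d2 /\
      (- RtoC (eps ^ 2) * d2 + RtoC (W x) * psi x = RtoC E * psi x)%C) /\
  psi 0 = RtoC 0 /\ psi L = RtoC 0 /\
  RInt (fun x => (Cmod (psi x)) ^ 2) 0 L = 1.

Definition L2norm (psi : R -> C) (a b : R) : R :=
  sqrt (RInt (fun x => (Cmod (psi x)) ^ 2) a b).

(* Write psi = u + i v.  Each of u, v is a real solution of eps^2 u'' = (W - E) u with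
   W = V + q_eps and u(0) = u(L) = 0, so its energy F = eps^2 u'^2 + (E - W) u^2 satisfies
   F' = - W' u^2, and for every nondecreasing weight phi
     (phi F)' >= (phi' (E - W) - phi W') u^2.
   Since V has a single critical point, at its minimum, V is steep wherever it lies above the
   levels that matter: left of y it falls, right of y it rises, with slope bounded away from 0;
   this survives the C^1-small perturbation q_eps and the shift lam_eps.  With the weight
   phi = exp K (or - exp (- K)), K' = k0 min(1, max(0, (E - W) / tau)), the right-hand side is
   at least C (|E| + 1) u^2, whence F(z) >= C (|E| + 1) int_0^z u^2 (resp. int_z^L u^2).
   At the boundary F = eps^2 u'^2, which gives the two flux bounds.  For the mass bound,
   integrating F against theta = ((x - a) (a + l - x))^2 and integrating by parts twice,
     int theta F = int (2 theta (E - W) + eps^2 theta'' / 2) u^2 <= B (|E| + 1) int_a^(a+l) u^2,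
   so the mass on either side of (y - nu, y + nu) is controlled by the mass inside. *)

From Stdlib Require Import Reals Lra.
From Coquelicot Require Import Coquelicot.
Open Scope R_scope.

Ltac fold_Derive :=
  repeat match goal with
  | |- context [Derive (fun t => ?f t) ?y] =>
      match goal with
      | H : is_derive f _ ?l |- _ =>
          replace (Derive (fun t => f t) y) with l
            by (symmetry; apply is_derive_unique; exact H)
      end
  end.

Ltac derive_from_hyps :=
  auto_derive; [repeat split; eexists; eassumption | fold_Derive].

Lemma continuous_Rplus (f g : R -> R) x :
  continuous f x -> continuous g x -> continuous (fun t => f t + g t) x.
Proof. exact (continuous_plus f g x). Qed.

Lemma continuous_Rminus (f g : R -> R) x :
  continuous f x -> continuous g x -> continuous (fun t => f t - g t) x.
Proof. exact (continuous_minus f g x). Qed.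

Lemma continuous_Rmult (f g : R -> R) x :
  continuous f x -> continuous g x -> continuous (fun t => f t * g t) x.
Proof. exact (continuous_mult f g x). Qed.

Lemma continuous_pow_comp (f : R -> R) n x :
  continuous f x -> continuous (fun t => f t ^ n) x.
Proof.
  intros Hf; induction n as [|n IH]; simpl.
  - apply continuous_const.
  - now apply continuous_Rmult.
Qed.

Ltac continuity_R :=
  repeat match goal with
  | |- continuous (fun _ => ?c) _ => apply continuous_const
  | |- continuous (fun t => t) _ => apply continuous_id
  | |- continuous (fun t => @?f t - @?g t) _ => apply (continuous_Rminus f g)
  | |- continuous (fun t => @?f t + @?g t) _ => apply (continuous_Rplus f g)
  | |- continuous (fun t => @?f t * @?g t) _ => apply (continuous_Rmult f g)
  | |- continuous (fun t => @?f t ^ ?n) _ => apply (continuous_pow_comp f n)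
  | |- continuous (fun t => exp (@?f t)) _ => apply (continuous_exp_comp f)
  | H : forall x, continuous ?f x |- continuous ?f _ => apply H
  | H : forall x, continuous ?f x |- continuous (fun t => ?f t) _ => apply H
  | H : continuous ?f ?x |- continuous ?f ?x => exact H
  | H : continuous ?f ?x |- continuous (fun t => ?f t) ?x => exact H
  end.

Lemma MVT_open (f df : R -> R) a b : a < b ->
  (forall x, a < x < b -> is_derive f x (df x)) ->
  (forall x, a <= x <= b -> continuous f x) ->
  exists c, a < c < b /\ f b - f a = df c * (b - a).
Proof.
  intros Hab Hd Hc.
  assert (pr1 : forall c, a < c < b -> derivable_pt f c)
    by (intros c Hc'; exists (df c); apply is_derive_Reals, Hd, Hc').
  assert (pr2 : forall c, a < c < b -> derivable_pt id c)
    by (intros; apply derivable_pt_id).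
  destruct (MVT f id a b pr1 pr2 Hab) as [c [Hcab Hmvt]].
  - intros; apply continuity_pt_filterlim, Hc; lra.
  - intros; apply derivable_continuous_pt, derivable_pt_id.
  - exists c; split; [exact Hcab|].
    rewrite (derive_pt_eq_0 f c (df c) (pr1 c Hcab)) in Hmvt
      by (apply is_derive_Reals, Hd, Hcab).
    rewrite (derive_pt_eq_0 id c 1 (pr2 c Hcab)) in Hmvt by apply derivable_pt_lim_id.
    unfold id in Hmvt; lra.
Qed.

Lemma le_of_derive_nonneg (g dg : R -> R) s t : s <= t ->
  (forall x, s < x < t -> is_derive g x (dg x)) ->
  (forall x, s < x < t -> 0 <= dg x) ->
  (forall x, s <= x <= t -> continuous g x) -> g s <= g t.
Proof.
  intros Hst Hd Hpos Hc.
  destruct (Req_dec s t) as [<-|Hne]; [lra|].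
  destruct (MVT_open g dg s t) as [c [Hc' Hmvt]]; try lra; auto.
  specialize (Hpos c Hc'); nra.
Qed.

Lemma is_derive_Rminus (f g : R -> R) x df dg l :
  is_derive f x df -> is_derive g x dg -> l = df - dg -> is_derive (fun t => f t - g t) x l.
Proof. intros Hf Hg ->; exact (is_derive_minus f g x df dg Hf Hg). Qed.

Lemma ex_RInt_cont (f : R -> R) a b : (forall x, continuous f x) -> ex_RInt f a b.
Proof. intros Hf; apply (ex_RInt_continuous (V:=R_CompleteNormedModule)); auto. Qed.

Lemma is_derive_RInt_cont (f : R -> R) a x :
  (forall x, continuous f x) -> is_derive (fun t => RInt f a t) x (f x).
Proof.
  intros Hf; apply (is_derive_RInt f _ a x); [|apply Hf].
  apply filter_forall; intros b; apply (RInt_correct (V:=R_CompleteNormedModule)).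
  now apply ex_RInt_cont.
Qed.

Lemma continuous_RInt_cont (f : R -> R) a x :
  (forall x, continuous f x) -> continuous (fun t => RInt f a t) x.
Proof.
  intros Hf; apply (ex_derive_continuous (K:=R_AbsRing) (V:=R_NormedModule)).
  eexists; now apply is_derive_RInt_cont.
Qed.

Lemma RInt_nonneg_cont (f : R -> R) a b : a <= b ->
  (forall x, continuous f x) -> (forall x, 0 <= f x) -> 0 <= RInt f a b.
Proof. intros; apply RInt_ge_0; auto; now apply ex_RInt_cont. Qed.

Lemma RInt_Chasles_cont (f : R -> R) a b c : (forall x, continuous f x) ->
  RInt f a c = RInt f a b + RInt f b c.
Proof.
  intros Hf; symmetry; apply (RInt_Chasles (V:=R_CompleteNormedModule));
    now apply ex_RInt_cont.
Qed.

Lemma RInt_sum_cont (f g : R -> R) a b : (forall x, continuous f x) -> (forall x, continuous g x) ->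
  RInt (fun x => f x + g x) a b = RInt f a b + RInt g a b.
Proof. intros; apply (RInt_plus (V:=R_CompleteNormedModule)); now apply ex_RInt_cont. Qed.

Lemma RInt_scal_cont (f : R -> R) k a b : (forall x, continuous f x) ->
  RInt (fun x => k * f x) a b = k * RInt f a b.
Proof. intros; apply (RInt_scal (V:=R_CompleteNormedModule)); now apply ex_RInt_cont. Qed.

Lemma continuous_bounded_on (f : R -> R) L : 0 <= L -> (forall x, continuous f x) ->
  exists M, forall x, 0 <= x <= L -> Rabs (f x) <= M.
Proof.
  intros HL Hc.
  destruct (continuity_ab_maj (fun x => Rabs (f x)) 0 L HL) as [m [Hm _]].
  - intros; apply continuity_pt_filterlim, continuous_Rabs_comp, Hc.
  - exists (Rabs (f m)); exact Hm.
Qed.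

Lemma exp_le_compat x y : x <= y -> exp x <= exp y.
Proof. intros [Hlt | ->]; [apply Rlt_le, exp_increasing, Hlt | apply Rle_refl]. Qed.

Lemma sqrt_le_of_sq_le C A eps s : 0 < A -> 0 < eps -> 0 <= s ->
  C * A <= eps ^ 2 * s ^ 2 -> sqrt C <= eps / sqrt A * s.
Proof.
  intros HA Heps Hs H.
  pose proof (sqrt_lt_R0 A HA).
  assert (Hx : 0 <= eps / sqrt A * s)
    by (apply Rmult_le_pos; [apply Rlt_le, Rdiv_lt_0_compat|]; lra).
  rewrite <- (sqrt_pow2 _ Hx); apply sqrt_le_1_alt.
  replace ((eps / sqrt A * s) ^ 2) with (eps ^ 2 * s ^ 2 / (sqrt A * sqrt A)) by (field; lra).
  rewrite sqrt_sqrt by lra; apply Rle_div_r; lra.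
Qed.

Lemma exists_small_parameter d1 d2 : 0 < d1 -> 0 < d2 ->
  exists e, 0 < e < 1 /\ e < d1 /\ e < d2.
Proof.
  intros; exists (Rmin d1 (Rmin d2 1) / 2).
  pose proof (Rmin_l d1 (Rmin d2 1)); pose proof (Rmin_r d1 (Rmin d2 1)).
  pose proof (Rmin_l d2 1); pose proof (Rmin_r d2 1).
  assert (0 < Rmin d1 (Rmin d2 1)) by (repeat apply Rmin_glb_lt; lra).
  lra.
Qed.

(* Coquelicot's integrals and mean value theorems want functions continuous on all of R, so
   functions given on [0, L] are extended by constants through [clamp]. *)
Definition clamp (L x : R) : R := Rmax 0 (Rmin x L).

Lemma clamp_in L x : 0 <= L -> 0 <= clamp L x <= L.
Proof. intros; unfold clamp, Rmax, Rmin; repeat destruct Rle_dec; lra. Qed.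

Lemma clamp_id L x : 0 <= x <= L -> clamp L x = x.
Proof. intros; unfold clamp, Rmax, Rmin; repeat destruct Rle_dec; lra. Qed.

Lemma clamp_above L x : 0 <= L -> L <= x -> clamp L x = L.
Proof. intros; unfold clamp, Rmax, Rmin; repeat destruct Rle_dec; lra. Qed.

Lemma clamp_mul_nonneg L x : 0 <= L -> 0 <= clamp L x * x.
Proof.
  intros; unfold clamp, Rmax, Rmin; repeat destruct Rle_dec; try nra; lra.
Qed.

Lemma clamp_1_lipschitz L a b : Rabs (clamp L a - clamp L b) <= Rabs (a - b).
Proof.
  unfold clamp, Rmax, Rmin, Rabs.
  repeat destruct Rle_dec; repeat destruct Rcase_abs; lra.
Qed.

Lemma continuous_clamp L x : continuous (clamp L) x.
Proof.
  apply filterlim_locally; intros e; exists e; intros y Hy.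
  eapply Rle_lt_trans; [apply clamp_1_lipschitz | exact Hy].
Qed.

Lemma continuous_clamp_comp {V : UniformSpace} L (f : R -> V) :
  0 <= L -> cont_on_0L L f -> forall x, continuous (fun t => f (clamp L t)) x.
Proof.
  intros HL Hf x.
  eapply filterlim_comp; [|apply (Hf _ (clamp_in L x HL))].
  intros P [d Hd]; exists d; intros y Hy; apply Hd; [|apply clamp_in, HL].
  eapply Rle_lt_trans; [apply clamp_1_lipschitz | exact Hy].
Qed.

Lemma is_derive_clamp_comp {V : NormedModule R_AbsRing} L (f : R -> V) x l :
  0 < x < L -> is_derive f x l -> is_derive (fun t => f (clamp L t)) x l.
Proof.
  intros Hx; apply (is_derive_ext_loc f).
  assert (Hd : 0 < Rmin x (L - x)) by (apply Rmin_glb_lt; lra).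
  exists (mkposreal _ Hd); intros t Ht.
  change (Rabs (t - x) < Rmin x (L - x)) in Ht.
  pose proof (Rmin_l x (L - x)); pose proof (Rmin_r x (L - x)).
  apply Rabs_lt_between in Ht; rewrite clamp_id by lra; reflexivity.
Qed.

Record C1_extension (L : R) (f df : R -> R) : Prop := {
  C1_continuous : forall x, continuous f x;
  C1_continuous_derive : forall x, continuous df x;
  C1_is_derive : forall x, 0 < x < L -> is_derive f x (df x) }.

Arguments C1_continuous {L f df}.
Arguments C1_continuous_derive {L f df}.
Arguments C1_is_derive {L f df}.

Lemma C1_extension_bounded L f df : 0 <= L -> C1_extension L f df ->
  exists M D, forall x, 0 <= x <= L -> Rabs (f x) <= M /\ Rabs (df x) <= D.
Proof.
  intros HL Hf.
  destruct (continuous_bounded_on f L HL (C1_continuous Hf)) as [M HM].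
  destruct (continuous_bounded_on df L HL (C1_continuous_derive Hf)) as [D HD].
  exists M, D; auto.
Qed.

Lemma C1_on_clamp L f df : 0 <= L -> C1_on L f df ->
  C1_extension L (fun x => f (clamp L x)) (fun x => df (clamp L x)).
Proof.
  intros HL [Hf [Hdf Hd]]; split; try now apply continuous_clamp_comp.
  intros x Hx; apply is_derive_clamp_comp; [exact Hx|].
  rewrite clamp_id by lra; now apply Hd.
Qed.

Lemma C1_extension_plus L f df g dg : C1_extension L f df -> C1_extension L g dg ->
  C1_extension L (fun x => f x + g x) (fun x => df x + dg x).
Proof.
  intros [Hf Hdf Hd] [Hg Hdg Hd']; split; intros x; try (continuity_R; fail).
  intros Hx; pose proof (Hd x Hx); pose proof (Hd' x Hx); derive_from_hyps; ring.
Qed.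

Lemma C1_extension_reflect L f df : C1_extension L f df ->
  C1_extension L (fun x => f (L - x)) (fun x => - df (L - x)).
Proof.
  intros [Hf Hdf Hd]; split.
  - intros x; apply (continuous_comp (fun t => L - t) f); [continuity_R | apply Hf].
  - intros x; apply (continuous_opp (K:=R_AbsRing) (V:=R_NormedModule)).
    apply (continuous_comp (fun t => L - t) df); [continuity_R | apply Hdf].
  - intros x Hx; specialize (Hd (L - x) ltac:(lra)).
    derive_from_hyps; ring.
Qed.

(** * Shape of the potential *)

Definition falls_above (W dW : R -> R) (h c s t : R) : Prop :=
  forall x, s <= x <= t -> h < W x -> dW x <= - c.

Definition rises_above (W dW : R -> R) (h c s t : R) : Prop :=
  forall x, s <= x <= t -> h < W x -> c <= dW x.

Lemma same_sign_of_no_root (f : R -> R) a b s t : (forall x, continuous f x) ->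
  (forall x, a <= x <= b -> f x <> 0) -> a <= s <= b -> a <= t <= b -> 0 < f s * f t.
Proof.
  intros Hc Hroot.
  assert (Hf : continuity f) by (intros x; apply continuity_pt_filterlim, Hc).
  enough (H : forall s t, a <= s <= t -> t <= b -> 0 < f s * f t).
  { intros Hs Ht; destruct (Rle_dec s t).
    - apply H; lra.
    - rewrite Rmult_comm; apply H; lra. }
  intros s' t' Hs Ht; apply Rnot_le_lt; intros Hle.
  destruct (IVT_cor f s' t' Hf (proj2 Hs) Hle) as [z [Hz Hfz]].
  apply (Hroot z); lra.
Qed.

Lemma continuous_ball (f : R -> R) x e : continuous f x -> 0 < e ->
  exists d, 0 < d /\ forall y, Rabs (y - x) < d -> Rabs (f y - f x) < e.
Proof.
  intros Hf He; apply filterlim_locally with (eps := mkposreal e He) in Hf.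
  destruct Hf as [d Hd]; exists d; split; [apply cond_pos | intros y Hy; apply Hd, Hy].
Qed.

Section SignOfDerivative.

Variables (L x0 : R) (V dV : R -> R).
Hypothesis HV : C1_extension L V dV.
Hypothesis Hx0 : 0 < x0 < L.
Hypothesis Hcrit : forall x, 0 <= x <= L -> (dV x = 0 <-> x = x0).
Hypothesis Hmin : forall x, 0 <= x <= L -> V x0 <= V x.

Lemma derive_pos_right x : x0 < x <= L -> 0 < dV x.
Proof.
  intros Hx; apply Rnot_le_lt; intros Hle.
  assert (Hsign : forall b, x0 < b <= L -> 0 < dV x * dV b).
  { intros b Hb; apply (same_sign_of_no_root dV (Rmin x b) L);
      [apply HV | | split; [apply Rmin_l | lra] | split; [apply Rmin_r | lra]].
    assert (x0 < Rmin x b) by (apply Rmin_glb_lt; lra).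
    intros z Hz Hdz; apply Hcrit in Hdz; lra. }
  assert (Hneg : forall b, x0 < b <= L -> dV b < 0).
  { intros b Hb; specialize (Hsign b Hb).
    destruct Hle as [Hlt|Heq]; [nra|].
    apply Hcrit in Heq; lra. }
  destruct (MVT_open V dV x0 L) as [c [Hc Hmvt]]; try lra.
  - intros; apply HV; lra.
  - intros; apply HV.
  - specialize (Hneg c ltac:(lra)); specialize (Hmin L ltac:(lra)); nra.
Qed.

End SignOfDerivative.

Lemma derive_neg_left L x0 V dV x : C1_extension L V dV -> 0 < x0 < L ->
  (forall x, 0 <= x <= L -> (dV x = 0 <-> x = x0)) ->
  (forall x, 0 <= x <= L -> V x0 <= V x) -> 0 <= x < x0 -> dV x < 0.
Proof.
  intros HV Hx0 Hcrit Hmin Hx.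
  enough (H : 0 < - dV (L - (L - x))) by (replace (L - (L - x)) with x in H by ring; lra).
  apply (derive_pos_right L (L - x0) (fun t => V (L - t)) (fun t => - dV (L - t))); try lra.
  - now apply C1_extension_reflect.
  - intros t Ht; destruct (Hcrit (L - t)) as [H1 H2]; [lra|]; split; intros H.
    + assert (L - t = x0) by (apply H1; lra); lra.
    + assert (dV (L - t) = 0) by (apply H2; lra); lra.
  - intros t Ht; replace (L - (L - x0)) with x0 by ring; apply Hmin; lra.
Qed.

Section Geometry.

Variables (L x0 : R) (V dV : R -> R).
Hypothesis HV : C1_extension L V dV.
Hypothesis Hx0 : 0 < x0 < L.
Hypothesis Hcrit : forall x, 0 <= x <= L -> (dV x = 0 <-> x = x0).
Hypothesis Hmin : forall x, 0 <= x <= L -> V x0 <= V x.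

Lemma V_nondecreasing_right a b : x0 <= a <= b -> b <= L -> V a <= V b.
Proof.
  intros Ha Hb; apply (le_of_derive_nonneg V dV); try lra.
  - intros; apply HV; lra.
  - intros x Hx; apply Rlt_le, (derive_pos_right L x0 V dV); auto; lra.
  - intros; apply HV.
Qed.

Lemma V_nonincreasing_left a b : 0 <= a <= b -> b <= x0 -> V b <= V a.
Proof.
  intros Ha Hb.
  enough (H : - V a <= - V b) by lra.
  apply (le_of_derive_nonneg (fun t => - V t) (fun t => - dV t)); try lra.
  - intros x Hx; apply (is_derive_opp (K:=R_AbsRing) (V:=R_NormedModule)), HV; lra.
  - intros x Hx; pose proof (derive_neg_left L x0 V dV x HV Hx0 Hcrit Hmin); lra.
  - intros x _; apply (continuous_opp (K:=R_AbsRing) (V:=R_NormedModule)), HV.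
Qed.

Lemma derive_bounded_away d : 0 < d -> exists c, 0 < c /\ forall x, 0 <= x <= L ->
  (x0 + d <= x -> c <= dV x) /\ (x <= x0 - d -> dV x <= - c).
Proof.
  intros Hd.
  assert (HdV : forall t, continuity_pt dV t)
    by (intros; apply continuity_pt_filterlim, HV).
  assert (Hright : exists c, 0 < c /\ forall x, x0 + d <= x <= L -> c <= dV x).
  { destruct (Rle_dec (x0 + d) L) as [Hle|Hgt].
    - destruct (continuity_ab_min dV (x0 + d) L Hle (fun c _ => HdV c)) as [m [Hm Hm']].
      exists (dV m); split; [apply (derive_pos_right L x0 V dV); auto; lra | exact Hm].
    - exists 1; split; intros; lra. }
  assert (Hleft : exists c, 0 < c /\ forall x, 0 <= x <= x0 - d -> dV x <= - c).
  { destruct (Rle_dec 0 (x0 - d)) as [Hle|Hgt].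
    - destruct (continuity_ab_maj dV 0 (x0 - d) Hle (fun c _ => HdV c)) as [m [Hm Hm']].
      exists (- dV m); split.
      + pose proof (derive_neg_left L x0 V dV m HV Hx0 Hcrit Hmin); lra.
      + intros x Hx; rewrite Ropp_involutive; apply Hm, Hx.
    - exists 1; split; intros; lra. }
  destruct Hright as [c1 [Hc1 Hr]], Hleft as [c2 [Hc2 Hl]].
  exists (Rmin c1 c2); split; [now apply Rmin_glb_lt|].
  intros x Hx; pose proof (Rmin_l c1 c2); pose proof (Rmin_r c1 c2); split; intros.
  - pose proof (Hr x ltac:(lra)); lra.
  - pose proof (Hl x ltac:(lra)); lra.
Qed.

Lemma level_geometry_left nu : 0 < nu -> exists tau c, 0 < tau /\ 0 < c /\
  (forall y, 0 <= y <= L -> falls_above V dV (V y - tau) c 0 (y - nu / 2)) /\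
  rises_above V dV (V 0 + nu / 2) c 0 L.
Proof.
  intros Hnu.
  destruct (derive_bounded_away (nu / 8)) as [c8 [Hc8 H8]]; [lra|].
  set (tau := c8 * nu / 16).
  assert (Htau : 0 < tau) by (unfold tau; nra).
  destruct (continuous_ball V x0 tau) as [d1 [Hd1 Hball1]]; [apply HV | exact Htau|].
  destruct (continuous_ball V x0 (nu / 2)) as [d2 [Hd2 Hball2]]; [apply HV | lra|].
  set (d := Rmin (Rmin d1 (nu / 4)) d2).
  assert (Hd : 0 < d /\ d <= d1 /\ d <= nu / 4 /\ d <= d2).
  { unfold d; pose proof (Rmin_l (Rmin d1 (nu / 4)) d2); pose proof (Rmin_r (Rmin d1 (nu / 4)) d2).
    pose proof (Rmin_l d1 (nu / 4)); pose proof (Rmin_r d1 (nu / 4)).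
    repeat split; try lra. repeat apply Rmin_glb_lt; lra. }
  destruct (derive_bounded_away d) as [c [Hc Hbound]]; [lra|].
  exists tau, c; repeat split; auto.
  - intros y Hy x Hx Hlevel.
    apply Hbound; [lra|]; apply Rnot_lt_le; intros Hnear.
    (* x near x0 forces y >= x0 + nu/4, where V grows at rate c8; so V x <= V y - tau. *)
    assert (Hclimb : V (y - nu / 8) + 2 * tau <= V y).
    { destruct (MVT_open V dV (y - nu / 8) y) as [z [Hz Hmvt]]; try lra.
      - intros; apply HV; lra.
      - intros; apply HV.
      - pose proof (proj1 (H8 z ltac:(lra)) ltac:(lra)); unfold tau; nra. }
    destruct (Rle_dec x x0).
    + assert (Habs : Rabs (x - x0) < d1) by (apply Rabs_def1; lra).
      specialize (Hball1 x Habs); apply Rabs_def2 in Hball1.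
      specialize (Hmin (y - nu / 8) ltac:(lra)); lra.
    + pose proof (V_nondecreasing_right x (y - nu / 8)); lra.
  - intros x Hx Hlevel.
    apply Hbound; [lra|]; apply Rnot_lt_le; intros Hnear.
    destruct (Rle_dec x x0).
    + pose proof (V_nonincreasing_left 0 x); lra.
    + assert (Habs : Rabs (x - x0) < d2) by (apply Rabs_def1; lra).
      specialize (Hball2 x Habs); apply Rabs_def2 in Hball2.
      specialize (Hmin 0 ltac:(lra)); lra.
Qed.

End Geometry.

Lemma falls_above_reflect L W dW h c s t :
  falls_above (fun x => W (L - x)) (fun x => - dW (L - x)) h c s t ->
  rises_above W dW h c (L - t) (L - s).
Proof.
  intros H x Hx Hh; specialize (H (L - x)); cbv beta in H.
  replace (L - (L - x)) with x in H by ring.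
  enough (- dW x <= - c) by lra; apply H; lra.
Qed.

Lemma rises_above_reflect L W dW h c s t :
  rises_above (fun x => W (L - x)) (fun x => - dW (L - x)) h c s t ->
  falls_above W dW h c (L - t) (L - s).
Proof.
  intros H x Hx Hh; specialize (H (L - x)); cbv beta in H.
  replace (L - (L - x)) with x in H by ring.
  enough (c <= - dW x) by lra; apply H; lra.
Qed.

Lemma level_geometry L x0 V dV nu : C1_extension L V dV -> 0 < x0 < L ->
  (forall x, 0 <= x <= L -> (dV x = 0 <-> x = x0)) ->
  (forall x, 0 <= x <= L -> V x0 <= V x) -> 0 < nu ->
  exists tau c, 0 < tau /\ 0 < c /\
  (forall y, 0 <= y <= L -> falls_above V dV (V y - tau) c 0 (y - nu / 2) /\
                           rises_above V dV (V y - tau) c (y + nu / 2) L) /\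
  rises_above V dV (V 0 + nu / 2) c 0 L /\ falls_above V dV (V L + nu / 2) c 0 L.
Proof.
  intros HV Hx0 Hcrit Hmin Hnu.
  destruct (level_geometry_left L x0 V dV HV Hx0 Hcrit Hmin nu Hnu)
    as [tau1 [c1 [Htau1 [Hc1 [Hfalls Hrises]]]]].
  destruct (level_geometry_left L (L - x0) (fun x => V (L - x)) (fun x => - dV (L - x))
              (C1_extension_reflect L V dV HV) ltac:(lra)) with (nu := nu)
    as [tau2 [c2 [Htau2 [Hc2 [Hfalls' Hrises']]]]]; auto.
  - intros x Hx; destruct (Hcrit (L - x)) as [H1 H2]; [lra|]; split; intros H.
    + assert (L - x = x0) by (apply H1; lra); lra.
    + assert (dV (L - x) = 0) by (apply H2; lra); lra.
  - intros x Hx; replace (L - (L - x0)) with x0 by ring; apply Hmin; lra.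
  - exists (Rmin tau1 tau2), (Rmin c1 c2).
    pose proof (Rmin_l tau1 tau2) as Ht1; pose proof (Rmin_r tau1 tau2) as Ht2.
    pose proof (Rmin_l c1 c2) as Hm1; pose proof (Rmin_r c1 c2) as Hm2.
    split; [now apply Rmin_glb_lt|]; split; [now apply Rmin_glb_lt|].
    split; [intros y Hy; split|split].
    + intros x Hx Hh; pose proof (Hfalls y Hy x Hx ltac:(lra)); lra.
    + intros x Hx Hh.
      pose proof (falls_above_reflect L V dV _ _ _ _ (Hfalls' (L - y) ltac:(lra)) x) as H.
      replace (V (L - (L - y))) with (V y) in H by (f_equal; ring).
      enough (c2 <= dV x) by lra; apply H; lra.
    + intros x Hx Hh; pose proof (Hrises x Hx ltac:(lra)); lra.
    + intros x Hx Hh.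
      pose proof (rises_above_reflect L V dV _ _ _ _ Hrises' x) as H.
      replace (V (L - 0)) with (V L) in H by (f_equal; ring).
      enough (dV x <= - c2) by lra; apply H; lra.
Qed.

Lemma falls_above_perturb V dV W dW h h' c s t eta :
  falls_above V dV h c s t ->
  (forall x, s <= x <= t -> Rabs (W x - V x) <= eta /\ Rabs (dW x - dV x) <= c / 2) ->
  h + eta <= h' -> falls_above W dW h' (c / 2) s t.
Proof.
  intros HV Hclose Hh x Hx Hlevel.
  destruct (Hclose x Hx) as [H0 H1]; apply Rabs_le_between in H0, H1.
  pose proof (HV x Hx ltac:(lra)); lra.
Qed.

Lemma rises_above_perturb V dV W dW h h' c s t eta :
  rises_above V dV h c s t ->
  (forall x, s <= x <= t -> Rabs (W x - V x) <= eta /\ Rabs (dW x - dV x) <= c / 2) ->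
  h + eta <= h' -> rises_above W dW h' (c / 2) s t.
Proof.
  intros HV Hclose Hh x Hx Hlevel.
  destruct (Hclose x Hx) as [H0 H1]; apply Rabs_le_between in H0, H1.
  pose proof (HV x Hx ltac:(lra)); lra.
Qed.

(** * Energy estimates for real Dirichlet solutions *)

Definition multiplier_gain (tau c k0 M : R) : R := Rmin (k0 * tau / 2) c / (M + tau + 1).

Lemma multiplier_gain_pos tau c k0 M : 0 < tau -> 0 < c -> 0 < k0 -> 0 <= M ->
  0 < multiplier_gain tau c k0 M.
Proof.
  intros; unfold multiplier_gain; apply Rdiv_lt_0_compat; [apply Rmin_glb_lt|]; nra.
Qed.

Lemma multiplier_pointwise_bound E w g tau c k0 M : 0 < tau -> 0 < c -> 0 < k0 ->
  Rabs w <= M -> - M <= E -> g <= k0 * tau / 2 -> (E - tau < w -> g <= - c) ->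
  multiplier_gain tau c k0 M * (Rabs E + 1) <= k0 * clamp 1 ((E - w) / tau) * (E - w) - g.
Proof.
  intros Htau Hc Hk0 Hw HE Hg Hlow.
  apply Rabs_le_between in Hw.
  assert (HA : 0 < M + tau + 1) by lra.
  assert (Hgain : multiplier_gain tau c k0 M * (M + tau + 1) = Rmin (k0 * tau / 2) c)
    by (unfold multiplier_gain; field; lra).
  pose proof (Rmin_l (k0 * tau / 2) c); pose proof (Rmin_r (k0 * tau / 2) c).
  assert (Hg0 : 0 < multiplier_gain tau c k0 M) by (apply multiplier_gain_pos; lra).
  destruct (Rle_dec tau (E - w)) as [Hfar|Hnear].
  - assert (1 <= (E - w) / tau) by (apply Rle_div_r; lra).
    rewrite clamp_above by lra.
    assert (HE1 : tau * (Rabs E + 1) <= (E - w) * (M + tau + 1))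
      by (unfold Rabs; destruct Rcase_abs; nra).
    assert (multiplier_gain tau c k0 M * (tau * (Rabs E + 1)) <= k0 * tau / 2 * (E - w)) by nra.
    assert (multiplier_gain tau c k0 M * (Rabs E + 1) <= k0 / 2 * (E - w))
      by (apply (Rmult_le_reg_l tau); [lra | nra]).
    assert (k0 * tau <= k0 * (E - w)) by (apply Rmult_le_compat_l; lra).
    lra.
  - set (r := (E - w) / tau).
    pose proof (clamp_mul_nonneg 1 r ltac:(lra)).
    assert (HE1 : Rabs E + 1 <= M + tau + 1) by (unfold Rabs; destruct Rcase_abs; lra).
    assert (k0 * clamp 1 r * (E - w) = k0 * tau * (clamp 1 r * r)) by (unfold r; field; lra).
    assert (0 <= k0 * tau * (clamp 1 r * r)) by (apply Rmult_le_pos; nra).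
    assert (multiplier_gain tau c k0 M * (Rabs E + 1) <= multiplier_gain tau c k0 M * (M + tau + 1))
      by (apply Rmult_le_compat_l; lra).
    pose proof (Hlow ltac:(lra)); lra.
Qed.

Lemma scaled_lower_bound X F a b : 0 <= X -> X <= exp a * F -> a <= b -> exp (- b) * X <= F.
Proof.
  intros HX HXF Hab.
  assert (exp (- b) <= exp (- a)) by (apply exp_le_compat; lra).
  assert (exp (- a) * (exp a * F) = F)
      by (rewrite <- Rmult_assoc, <- exp_plus, Rplus_opp_l, exp_0; ring).
  assert (0 < exp (- a)) by apply exp_pos.
  nra.
Qed.

Definition bump (a b x : R) : R := ((x - a) * (b - x)) ^ 2.
Definition bump_d1 (a b x : R) : R := 2 * (x - a) * (b - x) * (a + b - 2 * x).
Definition bump_d2 (a b x : R) : R := 2 * (a + b - 2 * x) ^ 2 - 4 * (x - a) * (b - x).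

Lemma bump_is_derive a b x : is_derive (bump a b) x (bump_d1 a b x).
Proof. unfold bump, bump_d1; auto_derive; [exact I | ring]. Qed.

Lemma bump_d1_is_derive a b x : is_derive (bump_d1 a b) x (bump_d2 a b x).
Proof. unfold bump_d1, bump_d2; auto_derive; [exact I | ring]. Qed.

Lemma bump_continuous a b x : continuous (bump a b) x.
Proof.
  apply (ex_derive_continuous (K:=R_AbsRing) (V:=R_NormedModule)).
  eexists; apply bump_is_derive.
Qed.

Lemma bump_d1_continuous a b x : continuous (bump_d1 a b) x.
Proof.
  apply (ex_derive_continuous (K:=R_AbsRing) (V:=R_NormedModule)).
  eexists; apply bump_d1_is_derive.
Qed.

Lemma bump_nonneg a b x : 0 <= bump a b x.
Proof. apply pow2_ge_0. Qed.

Lemma RInt_bump a l : RInt (bump a (a + l)) a (a + l) = l ^ 5 / 30.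
Proof.
  pose (P x := l ^ 2 * (x - a) ^ 3 / 3 - l * (x - a) ^ 4 / 2 + (x - a) ^ 5 / 5).
  replace (l ^ 5 / 30) with (P (a + l) - P a) by (unfold P; field).
  apply is_RInt_unique, (is_RInt_derive (V:=R_CompleteNormedModule) P).
  - intros x _; unfold P, bump; auto_derive; [exact I | field].
  - intros x _; apply bump_continuous.
Qed.

Definition bump_bound (l M : R) : R := 2 * l ^ 4 * (M + 1) + l ^ 2.

Lemma bump_weight_le a l x eps E w M : 0 < l -> a < x < a + l -> 0 < eps <= 1 ->
  Rabs w <= M ->
  2 * bump a (a + l) x * (E - w) + eps ^ 2 / 2 * bump_d2 a (a + l) x <=
  bump_bound l M * (Rabs E + 1).
Proof.
  intros Hl Hx Heps Hw.
  set (s := x - a); set (r := a + l - x).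
  assert (Hs : 0 < s < l) by (unfold s; lra); assert (Hr : 0 < r < l) by (unfold r; lra).
  assert (Hbump : 0 <= bump a (a + l) x <= l ^ 4).
  { unfold bump; change (x - a) with s; change (a + l - x) with r.
    split; [apply pow2_ge_0|].
    assert (s * r <= l * l) by nra.
    assert (0 <= s * r) by nra. nra. }
  assert (Hd2 : bump_d2 a (a + l) x <= 2 * l ^ 2).
  { unfold bump_d2; change (x - a) with s; change (a + l - x) with r.
    replace (a + (a + l) - 2 * x) with (r - s) by (unfold r, s; ring). nra. }
  assert (HEw : Rabs (E - w) <= (M + 1) * (Rabs E + 1)).
  { pose proof (Rabs_triang E (- w)); rewrite Rabs_Ropp in *; pose proof (Rabs_pos E).
    pose proof (Rabs_pos w); unfold Rminus; nra. }
  assert (Hlin : bump a (a + l) x * (E - w) <= l ^ 4 * ((M + 1) * (Rabs E + 1))).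
  { pose proof (Rle_abs (E - w)); pose proof (Rabs_pos (E - w)).
    apply Rle_trans with (bump a (a + l) x * Rabs (E - w)); [apply Rmult_le_compat_l; lra|].
    apply Rmult_le_compat; lra. }
  assert (Heps2 : 0 < eps ^ 2 <= 1) by (split; [apply pow_lt|]; nra).
  assert (eps ^ 2 / 2 * bump_d2 a (a + l) x <= l ^ 2).
  { destruct (Rle_dec 0 (bump_d2 a (a + l) x)); [nra|].
    assert (0 <= l ^ 2) by apply pow2_ge_0; nra. }
  unfold bump_bound; pose proof (Rabs_pos E); pose proof (pow2_ge_0 l); nra.
Qed.

Definition decay_constant (L tau c k0 M : R) : R :=
  exp (- (k0 * L)) * exp (- (k0 * L)) * multiplier_gain tau c k0 M.

Definition mass_ratio (L tau c k0 M l : R) : R :=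
  30 * bump_bound l M / (decay_constant L tau c k0 M * l ^ 5).

Lemma decay_constant_pos L tau c k0 M : 0 < tau -> 0 < c -> 0 < k0 -> 0 <= M ->
  0 < decay_constant L tau c k0 M.
Proof.
  intros; unfold decay_constant; pose proof (multiplier_gain_pos tau c k0 M).
  pose proof (exp_pos (- (k0 * L))); apply Rmult_lt_0_compat; [apply Rmult_lt_0_compat|]; auto.
Qed.

Lemma mass_ratio_nonneg L tau c k0 M l : 0 < tau -> 0 < c -> 0 < k0 -> 0 <= M -> 0 < l ->
  0 <= mass_ratio L tau c k0 M l.
Proof.
  intros; unfold mass_ratio, bump_bound.
  pose proof (decay_constant_pos L tau c k0 M); pose proof (pow_lt l 5); pose proof (pow_lt l 4).
  apply Rdiv_le_0_compat; [|apply Rmult_lt_0_compat]; auto; nra.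
Qed.

Record real_dirichlet_solution (L eps E : R) (W u du : R -> R) : Prop := {
  sol_continuous : forall x, continuous u x;
  sol_continuous_derive : forall x, continuous du x;
  sol_is_derive : forall x, 0 < x < L -> is_derive u x (du x);
  sol_equation : forall x, 0 < x < L ->
    exists a : R, is_derive du x a /\ eps ^ 2 * a = (W x - E) * u x;
  sol_left : u 0 = 0;
  sol_right : u L = 0 }.

Arguments sol_continuous {L eps E W u du}.
Arguments sol_continuous_derive {L eps E W u du}.
Arguments sol_is_derive {L eps E W u du}.
Arguments sol_equation {L eps E W u du}.
Arguments sol_left {L eps E W u du}.
Arguments sol_right {L eps E W u du}.

Section Energy.

Variables (L eps E : R) (W dW u du : R -> R).
Hypothesis Heps : 0 < eps.
Hypothesis HW : C1_extension L W dW.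
Hypothesis Hu : real_dirichlet_solution L eps E W u du.

Let u_continuous := sol_continuous Hu.
Let du_continuous := sol_continuous_derive Hu.
Let W_continuous := C1_continuous HW.
Let dW_continuous := C1_continuous_derive HW.

Definition energy x := eps ^ 2 * du x ^ 2 + (E - W x) * u x ^ 2.

Lemma energy_is_derive x : 0 < x < L -> is_derive energy x (- dW x * u x ^ 2).
Proof.
  intros Hx; destruct (sol_equation Hu x Hx) as [a [Ha Hode]].
  pose proof (sol_is_derive Hu x Hx); pose proof (C1_is_derive HW x Hx).
  unfold energy; derive_from_hyps.
  transitivity (2 * du x * (eps ^ 2 * a) + 2 * (E - W x) * du x * u x - dW x * u x ^ 2);
    [ring | rewrite Hode; ring].
Qed.

Lemma energy_continuous x : continuous energy x.
Proof. unfold energy; continuity_R. Qed.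

Lemma potential_term_le_energy x : (E - W x) * u x ^ 2 <= energy x.
Proof. unfold energy; pose proof (pow2_ge_0 (du x)); pose proof (pow2_ge_0 eps); nra. Qed.

Lemma energy_at_zero x : u x = 0 -> energy x = eps ^ 2 * du x ^ 2.
Proof. intros H; unfold energy; rewrite H; ring. Qed.

Definition mass s t := RInt (fun x => u x ^ 2) s t.

Lemma mass_is_derive s x : is_derive (mass s) x (u x ^ 2).
Proof. unfold mass; apply is_derive_RInt_cont; intros; continuity_R. Qed.

Lemma mass_continuous s x : continuous (mass s) x.
Proof. unfold mass; apply continuous_RInt_cont; intros; continuity_R. Qed.

Lemma mass_nonneg s t : s <= t -> 0 <= mass s t.
Proof.
  intros; unfold mass; apply RInt_nonneg_cont; auto; intros; [continuity_R | apply pow2_ge_0].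
Qed.

Lemma mass_point s : mass s s = 0.
Proof. unfold mass; apply (RInt_point (V:=R_CompleteNormedModule)). Qed.

Lemma mass_Chasles s t r : mass s r = mass s t + mass t r.
Proof. unfold mass; apply RInt_Chasles_cont; intros; continuity_R. Qed.

(* [auto_derive] must see [energy] and [mass] as functions with known derivatives. *)
Local Opaque energy mass.

Lemma energy_weighted_increment (phi dphi : R -> R) k s t : 0 <= s -> s <= t -> t <= L ->
  (forall x, continuous phi x) ->
  (forall x, s < x < t -> is_derive phi x (dphi x)) ->
  (forall x, s < x < t -> 0 <= dphi x) ->
  (forall x, s < x < t -> k <= dphi x * (E - W x) - phi x * dW x) ->
  k * mass s t <= phi t * energy t - phi s * energy s.
Proof.
  intros Hs Hst Ht Hphi Hdphi Hpos Hk.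
  enough (HG : phi s * energy s - k * mass s s <= phi t * energy t - k * mass s t)
    by (rewrite mass_point in HG; lra).
  apply (le_of_derive_nonneg (fun x => phi x * energy x - k * mass s x)
           (fun x => dphi x * energy x + phi x * (- dW x * u x ^ 2) - k * u x ^ 2)); auto.
  - intros x Hx; pose proof (Hdphi x Hx); pose proof (energy_is_derive x ltac:(lra)).
    pose proof (mass_is_derive s x).
    derive_from_hyps; ring.
  - intros x Hx; pose proof (potential_term_le_energy x); pose proof (pow2_ge_0 (u x)).
    pose proof (Hk x Hx); pose proof (Hpos x Hx).
    assert (0 <= dphi x * (energy x - (E - W x) * u x ^ 2)) by (apply Rmult_le_pos; lra).
    assert (0 <= (dphi x * (E - W x) - phi x * dW x - k) * u x ^ 2) by (apply Rmult_le_pos; lra).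
    nra.
  - intros x _; pose proof (energy_continuous x); pose proof (mass_continuous s x).
    continuity_R.
Qed.

Lemma bump_energy_le a b B : 0 <= a -> a < b -> b <= L ->
  (forall x, a < x < b -> 2 * bump a b x * (E - W x) + eps ^ 2 / 2 * bump_d2 a b x <= B) ->
  RInt (fun x => bump a b x * energy x) a b <= B * mass a b.
Proof.
  intros Ha Hab Hb HB.
  pose proof (bump_continuous a b) as Hbc; pose proof energy_continuous as Hec.
  (* flux vanishes at a and b; flux' = bump * energy - (2 bump (E - W) + eps^2 bump'' / 2) u^2 *)
  pose (flux x := eps ^ 2 / 2 * (bump a b x * (2 * u x * du x) - bump_d1 a b x * u x ^ 2)).
  pose (I x := RInt (fun y => bump a b y * energy y) a x).
  assert (Hends : flux a = 0 /\ flux b = 0) by (unfold flux, bump, bump_d1; split; ring).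
  enough (H : flux a + B * mass a a - I a <= flux b + B * mass a b - I b).
  { unfold I in H; rewrite mass_point, (RInt_point (V:=R_CompleteNormedModule)) in H.
    change zero with 0 in H; lra. }
  apply (le_of_derive_nonneg (fun x => flux x + B * mass a x - I x)
           (fun x => (B - (2 * bump a b x * (E - W x) + eps ^ 2 / 2 * bump_d2 a b x)) * u x ^ 2));
    [lra | | | ].
  - intros x Hx.
    destruct (sol_equation Hu x ltac:(lra)) as [d2 [Hd2 Hode]].
    pose proof (sol_is_derive Hu x ltac:(lra)).
    pose proof (bump_is_derive a b x); pose proof (bump_d1_is_derive a b x).
    pose proof (mass_is_derive a x).
    assert (HF : is_derive (fun x => flux x + B * mass a x) x
                   (eps ^ 2 / 2 * (bump a b x * (2 * du x ^ 2 + 2 * u x * d2)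
                      - bump_d2 a b x * u x ^ 2) + B * u x ^ 2))
      by (unfold flux; derive_from_hyps; field).
    assert (HI : is_derive I x (bump a b x * energy x))
      by (apply (is_derive_RInt_cont (fun y => bump a b y * energy y)); intros; continuity_R).
    apply (is_derive_Rminus _ _ x _ _ _ HF HI).
    replace d2 with ((W x - E) * u x / eps ^ 2) by (rewrite <- Hode; field; lra).
    with_strategy transparent [energy] unfold energy; field; lra.
  - intros x Hx; apply Rmult_le_pos; [pose proof (HB x Hx); lra | apply pow2_ge_0].
  - intros x _; pose proof (mass_continuous a x); pose proof (bump_d1_continuous a b).
    assert (continuous I x)
      by (apply (continuous_RInt_cont (fun y => bump a b y * energy y)); intros; continuity_R).
    unfold flux; continuity_R.
Qed.

Section Multiplier.

Variables (tau c k0 M : R).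
Hypothesis Htau : 0 < tau.
Hypothesis Hc : 0 < c.
Hypothesis Hk0 : 0 < k0.
Hypothesis Hbound : forall x, 0 <= x <= L -> Rabs (W x) <= M /\ Rabs (dW x) <= k0 * tau / 2.
Hypothesis HM : 0 <= M.
Hypothesis HE : - M <= E.

Definition weight_rate x := k0 * clamp 1 ((E - W x) / tau).

Definition weight_exponent x := RInt weight_rate 0 x.

Lemma weight_rate_continuous x : continuous weight_rate x.
Proof.
  unfold weight_rate; apply (continuous_Rmult (fun _ => k0)); [apply continuous_const|].
  apply (continuous_comp (fun y => (E - W y) / tau) (clamp 1)); [|apply continuous_clamp].
  unfold Rdiv; continuity_R.
Qed.

Lemma weight_exponent_is_derive x : is_derive weight_exponent x (weight_rate x).
Proof. apply is_derive_RInt_cont, weight_rate_continuous. Qed.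

Lemma weight_exponent_continuous x : continuous weight_exponent x.
Proof.
  apply (ex_derive_continuous (K:=R_AbsRing) (V:=R_NormedModule)).
  eexists; apply weight_exponent_is_derive.
Qed.

Lemma weight_exponent_bounds x : 0 <= x -> 0 <= weight_exponent x <= k0 * x.
Proof.
  intros Hx.
  assert (Hrate : forall y, 0 <= weight_rate y <= k0).
  { intros y; unfold weight_rate; pose proof (clamp_in 1 ((E - W y) / tau)); nra. }
  unfold weight_exponent; split.
  - apply RInt_nonneg_cont; [exact Hx | apply weight_rate_continuous | apply Hrate].
  - replace (k0 * x) with (RInt (fun _ => k0) 0 x)
      by (rewrite (RInt_const (V:=R_CompleteNormedModule));
          unfold scal; simpl; unfold mult; simpl; ring).
    apply RInt_le; [exact Hx | apply ex_RInt_cont, weight_rate_continuous | | intros; apply Hrate].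
    apply ex_RInt_cont; intros; apply continuous_const.
Qed.

Local Opaque weight_exponent.

Lemma energy_exponential_increment sg s t : sg = 1 \/ sg = -1 ->
  0 <= s -> s <= t -> t <= L ->
  (forall x, s <= x <= t -> E - tau < W x -> sg * dW x <= - c) ->
  exp (- (k0 * L)) * multiplier_gain tau c k0 M * (Rabs E + 1) * mass s t <=
  sg * exp (sg * weight_exponent t) * energy t - sg * exp (sg * weight_exponent s) * energy s.
Proof.
  intros Hsg Hs Hst Ht Hslope.
  apply (energy_weighted_increment (fun x => sg * exp (sg * weight_exponent x))
           (fun x => weight_rate x * exp (sg * weight_exponent x))); auto.
  - intros x; pose proof weight_exponent_continuous; continuity_R.
  - intros x Hx; pose proof (weight_exponent_is_derive x).
    derive_from_hyps; destruct Hsg as [-> | ->]; ring.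
  - intros x Hx; apply Rmult_le_pos; [|apply Rlt_le, exp_pos].
    unfold weight_rate; pose proof (clamp_in 1 ((E - W x) / tau)); nra.
  - intros x Hx.
    destruct (Hbound x ltac:(lra)) as [HWx HdWx].
    pose proof (weight_exponent_bounds x ltac:(lra)).
    assert (Hg : sg * dW x <= k0 * tau / 2)
      by (apply Rabs_le_between in HdWx; destruct Hsg as [-> | ->]; lra).
    pose proof (multiplier_pointwise_bound E (W x) (sg * dW x) tau c k0 M Htau Hc Hk0 HWx HE Hg
                  (Hslope x ltac:(lra))) as Hrate.
    assert (Hexp : exp (- (k0 * L)) <= exp (sg * weight_exponent x))
      by (apply exp_le_compat; destruct Hsg as [-> | ->]; nra).
    pose proof (multiplier_gain_pos tau c k0 M Htau Hc Hk0 HM).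
    pose proof (Rabs_pos E).
    replace (weight_rate x * exp (sg * weight_exponent x) * (E - W x)
        - sg * exp (sg * weight_exponent x) * dW x)
      with (exp (sg * weight_exponent x) * (k0 * clamp 1 ((E - W x) / tau) * (E - W x) - sg * dW x))
      by (unfold weight_rate; ring).
    rewrite Rmult_assoc.
    apply Rmult_le_compat; [apply Rlt_le, exp_pos | nra | exact Hexp | exact Hrate].
Qed.

Lemma increment_bound_nonneg s t : s <= t ->
  0 <= exp (- (k0 * L)) * multiplier_gain tau c k0 M * (Rabs E + 1) * mass s t.
Proof.
  intros Hst; pose proof (multiplier_gain_pos tau c k0 M Htau Hc Hk0 HM); pose proof (Rabs_pos E).
  pose proof (mass_nonneg s t Hst); pose proof (exp_pos (- (k0 * L))).
  apply Rmult_le_pos; [|lra]; apply Rmult_le_pos; [|lra]; apply Rmult_le_pos; lra.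
Qed.

Lemma energy_lower_bound_left z : 0 <= z <= L -> falls_above W dW (E - tau) c 0 z ->
  decay_constant L tau c k0 M * (Rabs E + 1) * mass 0 z <= energy z.
Proof.
  intros Hz Hfalls.
  pose proof (energy_exponential_increment 1 0 z (or_introl eq_refl) ltac:(lra) ltac:(lra)
    ltac:(lra) ltac:(intros x Hx Hl; pose proof (Hfalls x Hx Hl); lra)) as Hinc.
  pose proof (weight_exponent_bounds 0 (Rle_refl 0)).
  pose proof (weight_exponent_bounds z ltac:(lra)).
  replace (weight_exponent 0) with 0 in Hinc by lra; rewrite Rmult_0_r, exp_0 in Hinc.
  rewrite (energy_at_zero 0 (sol_left Hu)) in Hinc.
  assert (0 <= eps ^ 2 * du 0 ^ 2) by (apply Rmult_le_pos; apply pow2_ge_0).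
  replace (decay_constant L tau c k0 M * (Rabs E + 1) * mass 0 z)
    with (exp (- (k0 * L)) *
          (exp (- (k0 * L)) * multiplier_gain tau c k0 M * (Rabs E + 1) * mass 0 z))
    by (unfold decay_constant; ring).
  apply (scaled_lower_bound _ _ (1 * weight_exponent z));
    [apply increment_bound_nonneg; lra | lra | nra].
Qed.

Lemma energy_lower_bound_right z : 0 <= z <= L -> rises_above W dW (E - tau) c z L ->
  decay_constant L tau c k0 M * (Rabs E + 1) * mass z L <= energy z.
Proof.
  intros Hz Hrises.
  pose proof (energy_exponential_increment (-1) z L (or_intror eq_refl) ltac:(lra) ltac:(lra)
    ltac:(lra) ltac:(intros x Hx Hl; pose proof (Hrises x Hx Hl); lra)) as Hinc.
  pose proof (weight_exponent_bounds z ltac:(lra)).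
  rewrite (energy_at_zero L (sol_right Hu)) in Hinc.
  assert (0 <= exp (-1 * weight_exponent L) * (eps ^ 2 * du L ^ 2)).
  { pose proof (exp_pos (-1 * weight_exponent L)).
    pose proof (pow2_ge_0 eps); pose proof (pow2_ge_0 (du L)).
    apply Rmult_le_pos; nra. }
  replace (decay_constant L tau c k0 M * (Rabs E + 1) * mass z L)
    with (exp (- (k0 * L)) *
          (exp (- (k0 * L)) * multiplier_gain tau c k0 M * (Rabs E + 1) * mass z L))
    by (unfold decay_constant; ring).
  apply (scaled_lower_bound _ _ (-1 * weight_exponent z));
    [apply increment_bound_nonneg; lra | lra | nra].
Qed.

Hypothesis Heps1 : eps <= 1.

Lemma mass_le_of_energy_floor m a l : 0 <= a -> 0 < l -> a + l <= L ->
  (forall x, a <= x <= a + l -> decay_constant L tau c k0 M * (Rabs E + 1) * m <= energy x) ->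
  m <= mass_ratio L tau c k0 M l * mass a (a + l).
Proof.
  intros Ha Hl HaL Hfloor.
  pose proof (decay_constant_pos L tau c k0 M Htau Hc Hk0 HM) as HD.
  set (D := decay_constant L tau c k0 M) in *.
  pose proof (Rabs_pos E); pose proof (pow_lt l 5 Hl).
  assert (Hint : D * (Rabs E + 1) * m * (l ^ 5 / 30) <=
                 bump_bound l M * (Rabs E + 1) * mass a (a + l)).
  { rewrite <- (RInt_bump a l), <- RInt_scal_cont by apply bump_continuous.
    apply Rle_trans with (RInt (fun x => bump a (a + l) x * energy x) a (a + l)).
    - pose proof (bump_continuous a (a + l)); pose proof energy_continuous.
      apply RInt_le; [lra | apply ex_RInt_cont; intros; continuity_R
                     | apply ex_RInt_cont; intros; continuity_R |].
      intros x Hx; rewrite Rmult_comm.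
      apply Rmult_le_compat_l; [apply bump_nonneg | apply Hfloor; lra].
    - apply bump_energy_le; [lra | lra | lra |].
      intros x Hx; apply bump_weight_le; [lra | lra | lra | apply (Hbound x); lra]. }
  unfold mass_ratio; fold D.
  apply (Rmult_le_reg_r (D * l ^ 5 / 30 * (Rabs E + 1))).
  { apply Rmult_lt_0_compat; [apply Rdiv_lt_0_compat; [apply Rmult_lt_0_compat|]|]; lra. }
  replace (30 * bump_bound l M / (D * l ^ 5) * mass a (a + l) * (D * l ^ 5 / 30 * (Rabs E + 1)))
    with (bump_bound l M * (Rabs E + 1) * mass a (a + l)) by (field; lra).
  lra.
Qed.

Lemma mass_left_le a l : 0 <= a -> 0 < l -> a + l <= L ->
  falls_above W dW (E - tau) c 0 (a + l) ->
  mass 0 a <= mass_ratio L tau c k0 M l * mass a (a + l).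
Proof.
  intros Ha Hl HaL Hfalls; apply mass_le_of_energy_floor; auto.
  intros x Hx.
  assert (Hfx : falls_above W dW (E - tau) c 0 x) by (intros y Hy; apply Hfalls; lra).
  pose proof (energy_lower_bound_left x ltac:(lra) Hfx) as Hx_floor.
  rewrite (mass_Chasles 0 a x) in Hx_floor.
  assert (0 <= decay_constant L tau c k0 M * (Rabs E + 1) * mass a x).
  { pose proof (decay_constant_pos L tau c k0 M Htau Hc Hk0 HM); pose proof (Rabs_pos E).
    pose proof (mass_nonneg a x ltac:(lra)); apply Rmult_le_pos; [apply Rmult_le_pos|]; lra. }
  lra.
Qed.

Lemma mass_right_le a l : 0 <= a -> 0 < l -> a + l <= L ->
  rises_above W dW (E - tau) c a L ->
  mass (a + l) L <= mass_ratio L tau c k0 M l * mass a (a + l).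
Proof.
  intros Ha Hl HaL Hrises; apply mass_le_of_energy_floor; auto.
  intros x Hx.
  assert (Hrx : rises_above W dW (E - tau) c x L) by (intros y Hy; apply Hrises; lra).
  pose proof (energy_lower_bound_right x ltac:(lra) Hrx) as Hx_floor.
  rewrite (mass_Chasles x (a + l) L) in Hx_floor.
  assert (0 <= decay_constant L tau c k0 M * (Rabs E + 1) * mass x (a + l)).
  { pose proof (decay_constant_pos L tau c k0 M Htau Hc Hk0 HM); pose proof (Rabs_pos E).
    pose proof (mass_nonneg x (a + l) ltac:(lra)); apply Rmult_le_pos; [apply Rmult_le_pos|]; lra. }
  lra.
Qed.

Lemma mass_concentrates y nu : 0 < nu -> 0 <= y <= L ->
  falls_above W dW (E - tau) c 0 (y - nu / 2) -> rises_above W dW (E - tau) c (y + nu / 2) L ->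
  mass 0 L <= (1 + 2 * mass_ratio L tau c k0 M (nu / 2)) * mass (Rmax (y - nu) 0) (Rmin (y + nu) L).
Proof.
  intros Hnu Hy Hfalls Hrises.
  set (a := Rmax (y - nu) 0); set (b := Rmin (y + nu) L).
  set (R := mass_ratio L tau c k0 M (nu / 2)).
  assert (Hab : 0 <= a <= y /\ y <= b <= L)
    by (unfold a, b, Rmax, Rmin; repeat destruct Rle_dec; lra).
  assert (HR : 0 <= R) by (apply mass_ratio_nonneg; lra).
  pose proof (mass_nonneg a b ltac:(lra)).
  assert (Hleft : mass 0 a <= R * mass a b).
  { destruct (Rle_dec (y - nu) 0) as [Hout|Hin].
    - assert (Ha0 : a = 0) by (unfold a, Rmax; destruct Rle_dec; lra).
      rewrite Ha0 at 1; rewrite mass_point; nra.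
    - replace a with (y - nu) in * by (unfold a, Rmax; destruct Rle_dec; lra).
      replace (y - nu / 2) with (y - nu + nu / 2) in Hfalls by field.
      pose proof (mass_left_le (y - nu) (nu / 2) ltac:(lra) ltac:(lra) ltac:(lra) Hfalls) as Hl.
      fold R in Hl; rewrite (mass_Chasles (y - nu) (y - nu + nu / 2) b).
      pose proof (mass_nonneg (y - nu + nu / 2) b ltac:(lra)); nra. }
  assert (Hright : mass b L <= R * mass a b).
  { destruct (Rle_dec L (y + nu)) as [Hout|Hin].
    - assert (HbL : b = L) by (unfold b, Rmin; destruct Rle_dec; lra).
      rewrite HbL at 1; rewrite mass_point; nra.
    - replace b with (y + nu / 2 + nu / 2) in * by (unfold b, Rmin; destruct Rle_dec; lra).
      pose proof (mass_right_le (y + nu / 2) (nu / 2) ltac:(lra) ltac:(lra) ltac:(lra) Hrises)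
          as Hr.
      fold R in Hr; rewrite (mass_Chasles a (y + nu / 2) (y + nu / 2 + nu / 2)).
      pose proof (mass_nonneg a (y + nu / 2) ltac:(lra)); nra. }
  rewrite (mass_Chasles 0 a L), (mass_Chasles a b L); lra.
Qed.

Lemma boundary_flux_left : 0 <= L -> rises_above W dW (E - tau) c 0 L ->
  decay_constant L tau c k0 M * (Rabs E + 1) * mass 0 L <= eps ^ 2 * du 0 ^ 2.
Proof.
  intros HL Hrises; rewrite <- (energy_at_zero 0 (sol_left Hu)).
  apply energy_lower_bound_right; [lra | exact Hrises].
Qed.

Lemma boundary_flux_right : 0 <= L -> falls_above W dW (E - tau) c 0 L ->
  decay_constant L tau c k0 M * (Rabs E + 1) * mass 0 L <= eps ^ 2 * du L ^ 2.
Proof.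
  intros HL Hfalls; rewrite <- (energy_at_zero L (sol_right Hu)).
  apply energy_lower_bound_left; [lra | exact Hfalls].
Qed.

End Multiplier.

End Energy.

(** * Complex eigenfunctions *)

Lemma is_derive_linear_comp (p : R * R -> R) (f : R -> C) x l :
  is_linear p ->
  is_derive f x l -> is_derive (fun t => p (f t)) x (p l).
Proof.
  intros Hp Hf; unfold is_derive in *.
  eapply filterdiff_ext_lin; [apply (filterdiff_comp' f p x _ p Hf), filterdiff_linear, Hp|].
  intros y; simpl; now rewrite (linear_scal _ Hp).
Qed.

Lemma eigen_equation_parts eps w E d2 z :
  (- RtoC (eps ^ 2) * d2 + RtoC w * z = RtoC E * z)%C ->
  eps ^ 2 * fst d2 = (w - E) * fst z /\ eps ^ 2 * snd d2 = (w - E) * snd z.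
Proof.
  intros H; pose proof (f_equal fst H); pose proof (f_equal snd H); simpl in *; split; lra.
Qed.

Lemma dirichlet_eigenfunction_ext L eps W W' E psi dpsi :
  (forall x, 0 < x < L -> W x = W' x) ->
  dirichlet_eigenfunction L eps W E psi dpsi -> dirichlet_eigenfunction L eps W' E psi dpsi.
Proof.
  intros HWW' [Hc [Hdc [Hd [Hode Hrest]]]]; do 4 (split; [auto|]); [|exact Hrest].
  intros x Hx; rewrite <- HWW' by exact Hx; apply Hode, Hx.
Qed.

Lemma eigenfunction_component (p : R * R -> R) L eps W E psi dpsi :
  is_linear p ->
  (forall w d2 z, (- RtoC (eps ^ 2) * d2 + RtoC w * z = RtoC E * z)%C ->
     eps ^ 2 * p d2 = (w - E) * p z) ->
  0 < L -> dirichlet_eigenfunction L eps W E psi dpsi ->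
  real_dirichlet_solution L eps E W
    (fun x => p (psi (clamp L x))) (fun x => p (dpsi (clamp L x))).
Proof.
  intros Hp Heq HL [Hc [Hdc [Hd [Hode [H0 [HL0 _]]]]]].
  assert (Hpc : forall z, continuous p z)
    by (intros z; exact (linear_cont p z Hp)).
  split.
  - intros x; apply (continuous_comp (fun t => psi (clamp L t)) p); [|apply Hpc].
    apply continuous_clamp_comp; [lra | exact Hc].
  - intros x; apply (continuous_comp (fun t => dpsi (clamp L t)) p); [|apply Hpc].
    apply continuous_clamp_comp; [lra | exact Hdc].
  - intros x Hx; rewrite (clamp_id L x) by lra.
    apply is_derive_linear_comp, is_derive_clamp_comp, Hd; auto.
  - intros x Hx; destruct (Hode x Hx) as [d2 [Hd2 Heq2]].
    exists (p d2); rewrite (clamp_id L x) by lra; split; [|apply Heq, Heq2].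
    apply is_derive_linear_comp, is_derive_clamp_comp, Hd2; auto.
  - rewrite clamp_id, H0 by lra; exact (linear_zero p Hp).
  - rewrite clamp_id, HL0 by lra; exact (linear_zero p Hp).
Qed.

Section Eigenfunction.

Variables (L eps E : R) (W dW : R -> R) (psi dpsi : R -> C) (tau c k0 M : R).
Hypothesis HL : 0 < L.
Hypothesis Heps : 0 < eps <= 1.
Hypothesis HW : C1_extension L W dW.
Hypothesis Hpsi : dirichlet_eigenfunction L eps W E psi dpsi.
Hypothesis Htau : 0 < tau.
Hypothesis Hc : 0 < c.
Hypothesis Hk0 : 0 < k0.
Hypothesis Hbound : forall x, 0 <= x <= L -> Rabs (W x) <= M /\ Rabs (dW x) <= k0 * tau / 2.
Hypothesis HM : 0 <= M.
Hypothesis HE : - M <= E.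

Let re := fun x => fst (psi (clamp L x)).
Let im := fun x => snd (psi (clamp L x)).

Let re_solution : real_dirichlet_solution L eps E W re (fun x => fst (dpsi (clamp L x))) :=
  eigenfunction_component fst L eps W E psi dpsi is_linear_fst
    (fun w d2 z H => proj1 (eigen_equation_parts eps w E d2 z H)) HL Hpsi.

Let im_solution : real_dirichlet_solution L eps E W im (fun x => snd (dpsi (clamp L x))) :=
  eigenfunction_component snd L eps W E psi dpsi is_linear_snd
    (fun w d2 z H => proj2 (eigen_equation_parts eps w E d2 z H)) HL Hpsi.

Lemma Cmod_sq_mass a b : 0 <= a -> a <= b -> b <= L ->
  RInt (fun x => Cmod (psi x) ^ 2) a b = mass re a b + mass im a b.
Proof.
  intros Ha Hab Hb; unfold mass; rewrite <- RInt_sum_cont.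
  - apply RInt_ext; intros x Hx; rewrite Rmin_left, Rmax_right in Hx by lra.
    unfold re, im; rewrite clamp_id, Cmod2_alt by lra; reflexivity.
  - pose proof (sol_continuous re_solution); intros; continuity_R.
  - pose proof (sol_continuous im_solution); intros; continuity_R.
Qed.

Lemma eigenfunction_total_mass : mass re 0 L + mass im 0 L = 1.
Proof. rewrite <- Cmod_sq_mass by lra; apply Hpsi. Qed.

Lemma eigenfunction_mass_near y nu : 0 < nu -> 0 <= y <= L ->
  falls_above W dW (E - tau) c 0 (y - nu / 2) -> rises_above W dW (E - tau) c (y + nu / 2) L ->
  sqrt (1 / (1 + 2 * mass_ratio L tau c k0 M (nu / 2))) <=
  L2norm psi (Rmax (y - nu) 0) (Rmin (y + nu) L).
Proof.
  intros Hnu Hy Hfalls Hrises.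
  set (a := Rmax (y - nu) 0); set (b := Rmin (y + nu) L).
  set (R := mass_ratio L tau c k0 M (nu / 2)).
  assert (Hab : 0 <= a <= b /\ b <= L) by (unfold a, b, Rmax, Rmin; repeat destruct Rle_dec; lra).
  assert (HR : 0 <= R) by (apply mass_ratio_nonneg; lra).
  pose proof (mass_concentrates L eps E W dW re _ (proj1 Heps) HW re_solution tau c k0 M
                Htau Hc Hk0 Hbound HM HE (proj2 Heps) y nu Hnu Hy Hfalls Hrises) as Hre.
  pose proof (mass_concentrates L eps E W dW im _ (proj1 Heps) HW im_solution tau c k0 M
                Htau Hc Hk0 Hbound HM HE (proj2 Heps) y nu Hnu Hy Hfalls Hrises) as Him.
  pose proof eigenfunction_total_mass.
  unfold L2norm; fold a b; rewrite Cmod_sq_mass by lra.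
  apply sqrt_le_1_alt; apply Rle_div_l; [lra|].
  fold R a b in Hre, Him; lra.
Qed.

Lemma eigenfunction_flux_left : rises_above W dW (E - tau) c 0 L ->
  sqrt (decay_constant L tau c k0 M) <= eps / sqrt (Rabs E + 1) * Cmod (dpsi 0).
Proof.
  intros Hrises.
  pose proof (boundary_flux_left L eps E W dW re _ HW re_solution tau c k0 M
                Htau Hc Hk0 Hbound HM HE ltac:(lra) Hrises) as Hre.
  pose proof (boundary_flux_left L eps E W dW im _ HW im_solution tau c k0 M
                Htau Hc Hk0 Hbound HM HE ltac:(lra) Hrises) as Him.
  pose proof eigenfunction_total_mass as Htotal; pose proof (Rabs_pos E).
  cbv beta in Hre, Him; rewrite clamp_id in Hre, Him by lra.
  apply sqrt_le_of_sq_le; [lra | lra | apply Cmod_ge_0 |].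
  rewrite Cmod2_alt; unfold Re, Im.
  replace (decay_constant L tau c k0 M * (Rabs E + 1))
    with (decay_constant L tau c k0 M * (Rabs E + 1) * (mass re 0 L + mass im 0 L))
    by (rewrite Htotal; ring).
  lra.
Qed.

Lemma eigenfunction_flux_right : falls_above W dW (E - tau) c 0 L ->
  sqrt (decay_constant L tau c k0 M) <= eps / sqrt (Rabs E + 1) * Cmod (dpsi L).
Proof.
  intros Hfalls.
  pose proof (boundary_flux_right L eps E W dW re _ HW re_solution tau c k0 M
                Htau Hc Hk0 Hbound HM HE ltac:(lra) Hfalls) as Hre.
  pose proof (boundary_flux_right L eps E W dW im _ HW im_solution tau c k0 M
                Htau Hc Hk0 Hbound HM HE ltac:(lra) Hfalls) as Him.
  pose proof eigenfunction_total_mass as Htotal; pose proof (Rabs_pos E).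
  cbv beta in Hre, Him; rewrite clamp_id in Hre, Him by lra.
  apply sqrt_le_of_sq_le; [lra | lra | apply Cmod_ge_0 |].
  rewrite Cmod2_alt; unfold Re, Im.
  replace (decay_constant L tau c k0 M * (Rabs E + 1))
    with (decay_constant L tau c k0 M * (Rabs E + 1) * (mass re 0 L + mass im 0 L))
    by (rewrite Htotal; ring).
  lra.
Qed.

End Eigenfunction.

(** * Small perturbations of the potential *)

Definition estimate_constant (L tau c k0 M nu : R) : R :=
  Rmin (sqrt (1 / (1 + 2 * mass_ratio L tau c k0 M (nu / 2)))) (sqrt (decay_constant L tau c k0 M)).

Lemma estimate_constant_pos L tau c k0 M nu : 0 < tau -> 0 < c -> 0 < k0 -> 0 <= M -> 0 < nu ->
  0 < estimate_constant L tau c k0 M nu.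
Proof.
  intros; unfold estimate_constant.
  pose proof (mass_ratio_nonneg L tau c k0 M (nu / 2)).
  pose proof (decay_constant_pos L tau c k0 M).
  apply Rmin_glb_lt; apply sqrt_lt_R0; [apply Rdiv_lt_0_compat|]; lra.
Qed.

Section PerturbedEstimates.

Variables (L nu tau0 c MV MdV : R) (V dV : R -> R).
Hypothesis HL : 0 < L.
Hypothesis Hnu : 0 < nu.
Hypothesis Htau0 : 0 < tau0.
Hypothesis Hc : 0 < c.
Hypothesis HV : C1_extension L V dV.
Hypothesis Hlevel : forall y, 0 <= y <= L ->
  falls_above V dV (V y - tau0) c 0 (y - nu / 2) /\ rises_above V dV (V y - tau0) c (y + nu / 2) L.
Hypothesis Hlevel0 : rises_above V dV (V 0 + nu / 2) c 0 L.
Hypothesis HlevelL : falls_above V dV (V L + nu / 2) c 0 L.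
Hypothesis HVbound : forall x, 0 <= x <= L -> Rabs (V x) <= MV /\ Rabs (dV x) <= MdV.

Definition margin := Rmin (Rmin tau0 nu / 4) 1.
Definition tolerance := Rmin margin (c / 2).
Definition rate_scale := 2 * (MdV + 1) / margin.
Definition uniform_constant := estimate_constant L margin (c / 2) rate_scale (MV + 2) nu.

Lemma margin_spec : 0 < margin /\ margin <= tau0 / 4 /\ margin <= nu / 4 /\ margin <= 1.
Proof.
  unfold margin; pose proof (Rmin_l (Rmin tau0 nu / 4) 1); pose proof (Rmin_r (Rmin tau0 nu / 4) 1).
  pose proof (Rmin_l tau0 nu); pose proof (Rmin_r tau0 nu).
  repeat split; try lra.
  apply Rmin_glb_lt; [apply Rdiv_lt_0_compat; [apply Rmin_glb_lt|]|]; lra.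
Qed.

Lemma tolerance_spec : 0 < tolerance /\ tolerance <= margin /\ tolerance <= c / 2.
Proof.
  unfold tolerance; pose proof margin_spec.
  pose proof (Rmin_l margin (c / 2)); pose proof (Rmin_r margin (c / 2)).
  repeat split; try lra; apply Rmin_glb_lt; lra.
Qed.

Lemma potential_bounds_nonneg : 0 <= MV /\ 0 <= MdV.
Proof.
  destruct (HVbound 0 ltac:(lra)); pose proof (Rabs_pos (V 0)); pose proof (Rabs_pos (dV 0)); lra.
Qed.

Lemma rate_scale_pos : 0 < rate_scale.
Proof.
  pose proof margin_spec; pose proof potential_bounds_nonneg.
  unfold rate_scale; apply Rdiv_lt_0_compat; lra.
Qed.

Lemma uniform_constant_pos : 0 < uniform_constant.
Proof.
  pose proof margin_spec; pose proof potential_bounds_nonneg.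
  apply estimate_constant_pos; try lra; apply rate_scale_pos.
Qed.

Variables (eps E lam : R) (q dq : R -> R) (psi dpsi : R -> C).
Hypothesis Heps : 0 < eps <= 1.
Hypothesis Hq : C1_extension L q dq.
Hypothesis Hqsmall : forall x, 0 <= x <= L -> Rabs (q x) <= tolerance /\ Rabs (dq x) <= tolerance.
Hypothesis Hlam : Rabs lam <= margin.
Hypothesis Hpsi : dirichlet_eigenfunction L eps (fun x => V x + q x) E psi dpsi.

Lemma perturbed_bound x : 0 <= x <= L ->
  Rabs (V x + q x) <= MV + 2 /\ Rabs (dV x + dq x) <= rate_scale * margin / 2.
Proof.
  intros Hx; pose proof margin_spec; pose proof tolerance_spec.
  destruct (HVbound x Hx) as [H1 H2]; destruct (Hqsmall x Hx) as [H3 H4].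
  replace (rate_scale * margin / 2) with (MdV + 1) by (unfold rate_scale; field; lra).
  split; eapply Rle_trans; try apply Rabs_triang; lra.
Qed.

Lemma perturbed_close x : 0 <= x <= L ->
  Rabs (V x + q x - V x) <= tolerance /\ Rabs (dV x + dq x - dV x) <= c / 2.
Proof.
  intros Hx; pose proof tolerance_spec; destruct (Hqsmall x Hx).
  replace (V x + q x - V x) with (q x) by ring; replace (dV x + dq x - dV x) with (dq x) by ring.
  split; lra.
Qed.

Let HW := C1_extension_plus L V dV q dq HV Hq.

Lemma perturbed_mass_near y : 0 <= y <= L -> E >= V y - lam ->
  L2norm psi (Rmax (y - nu) 0) (Rmin (y + nu) L) >= uniform_constant.
Proof.
  intros Hy HE.
  pose proof margin_spec; pose proof tolerance_spec; pose proof potential_bounds_nonneg.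
  destruct (Hlevel y Hy) as [Hfalls Hrises].
  pose proof (HVbound y Hy) as [HVy _]; apply Rabs_le_between in HVy, Hlam.
  apply Rle_ge; eapply Rle_trans; [apply Rmin_l|].
  apply (eigenfunction_mass_near L eps E (fun x => V x + q x) (fun x => dV x + dq x) psi dpsi
           margin (c / 2) rate_scale (MV + 2));
    auto using rate_scale_pos, perturbed_bound; try lra.
  - apply (falls_above_perturb V dV _ _ (V y - tau0) _ c _ _ tolerance Hfalls);
      [intros; apply perturbed_close | ]; lra.
  - apply (rises_above_perturb V dV _ _ (V y - tau0) _ c _ _ tolerance Hrises);
      [intros; apply perturbed_close | ]; lra.
Qed.

Lemma perturbed_flux_left : E >= V 0 + nu ->
  eps / sqrt (Rabs E + 1) * Cmod (dpsi 0) >= uniform_constant.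
Proof.
  intros HE.
  pose proof margin_spec; pose proof tolerance_spec; pose proof potential_bounds_nonneg.
  pose proof (HVbound 0 ltac:(lra)) as [HV0 _]; apply Rabs_le_between in HV0.
  apply Rle_ge; eapply Rle_trans; [apply Rmin_r|].
  apply (eigenfunction_flux_left L eps E (fun x => V x + q x) (fun x => dV x + dq x) psi dpsi
           margin (c / 2) rate_scale (MV + 2));
    auto using rate_scale_pos, perturbed_bound; try lra.
  apply (rises_above_perturb V dV _ _ (V 0 + nu / 2) _ c _ _ tolerance Hlevel0);
    [intros; apply perturbed_close | ]; lra.
Qed.

Lemma perturbed_flux_right : E >= V L + nu ->
  eps / sqrt (Rabs E + 1) * Cmod (dpsi L) >= uniform_constant.
Proof.
  intros HE.
  pose proof margin_spec; pose proof tolerance_spec; pose proof potential_bounds_nonneg.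
  pose proof (HVbound L ltac:(lra)) as [HVL _]; apply Rabs_le_between in HVL.
  apply Rle_ge; eapply Rle_trans; [apply Rmin_r|].
  apply (eigenfunction_flux_right L eps E (fun x => V x + q x) (fun x => dV x + dq x) psi dpsi
           margin (c / 2) rate_scale (MV + 2));
    auto using rate_scale_pos, perturbed_bound; try lra.
  apply (falls_above_perturb V dV _ _ (V L + nu / 2) _ c _ _ tolerance HlevelL);
    [intros; apply perturbed_close | ]; lra.
Qed.

End PerturbedEstimates.

Theorem proposition2p3
  (L : R) (HL : 0 < L)
  (V dV : R -> R) (HV : C1_on L V dV)
  (x0 : R) (Hx0 : 0 < x0 < L)
  (Hcrit : forall x, 0 <= x <= L -> (dV x = 0 <-> x = x0))
  (Hmin : forall x, 0 <= x <= L -> V x0 <= V x)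
  (q dq : R -> R -> R)
  (Hq : forall eps, 0 < eps <= 1 -> C1_on L (q eps) (dq eps))
  (Hq0 : forall eta, 0 < eta -> exists delta, 0 < delta /\
           forall eps, 0 < eps < delta -> eps <= 1 ->
             forall x, 0 <= x <= L -> Rabs (q eps x) <= eta /\ Rabs (dq eps x) <= eta)
  (lam : R -> R)
  (Hlam : forall eta, 0 < eta -> exists delta, 0 < delta /\
           forall eps, 0 < eps < delta -> eps < 1 -> Rabs (lam eps) <= eta)
  (nu : R) (Hnu : 0 < nu) :
  exists K eps0, 0 < K /\ 0 < eps0 < 1 /\
    forall y, 0 <= y <= L ->
    forall eps, 0 < eps <= eps0 ->
    forall (E : R) (psi dpsi : R -> C),
      dirichlet_eigenfunction L eps (fun x => V x + q eps x) E psi dpsi ->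
      (E >= V y - lam eps -> L2norm psi (Rmax (y - nu) 0) (Rmin (y + nu) L) >= K) /\
      (E >= V 0 + nu -> eps / sqrt (Rabs E + 1) * Cmod (dpsi 0) >= K) /\
      (E >= V L + nu -> eps / sqrt (Rabs E + 1) * Cmod (dpsi L) >= K).
Proof.
  pose proof (C1_on_clamp L V dV ltac:(lra) HV) as HVc.
  assert (HVcV : forall x, 0 <= x <= L -> V (clamp L x) = V x) by (intros; now rewrite clamp_id).
  destruct (level_geometry L x0 _ _ nu HVc Hx0)
      as [tau0 [c [Htau0 [Hc [Hlevel [Hlevel0 HlevelL]]]]]];
    [intros; rewrite clamp_id; auto | intros; rewrite !HVcV; auto; lra | exact Hnu |].
  destruct (C1_extension_bounded L _ _ ltac:(lra) HVc) as [MV [MdV HVbound]].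
  destruct (Hq0 (tolerance nu tau0 c)) as [dq0 [Hdq0 Hqsmall]]; [apply tolerance_spec; lra|].
  destruct (Hlam (margin nu tau0)) as [dl0 [Hdl0 Hlamsmall]]; [apply margin_spec; lra|].
  destruct (exists_small_parameter dq0 dl0 Hdq0 Hdl0) as [eps0 [Heps0 [Hdq Hdl]]].
  exists (uniform_constant L nu tau0 c MV MdV), eps0.
  split; [exact (uniform_constant_pos L nu tau0 c MV MdV _ _ HL Hnu Htau0 Hc HVbound)|].
  split; [exact Heps0|].
  intros y Hy eps Heps E psi dpsi Hpsi.
  pose proof (C1_on_clamp L (q eps) (dq eps) ltac:(lra) (Hq eps ltac:(lra))) as Hqc.
  apply (dirichlet_eigenfunction_ext L eps _ (fun x => V (clamp L x) + q eps (clamp L x))) in Hpsi;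
    [|intros; rewrite !clamp_id by lra; reflexivity].
  assert (Hqs : forall x, 0 <= x <= L -> Rabs (q eps (clamp L x)) <= tolerance nu tau0 c /\
                                          Rabs (dq eps (clamp L x)) <= tolerance nu tau0 c)
    by (intros x Hx; rewrite clamp_id by lra; apply Hqsmall; lra).
  rewrite <- (HVcV y), <- (HVcV 0), <- (HVcV L) by lra.
  split; [|split]; intros HE.
  - exact (perturbed_mass_near L nu tau0 c MV MdV _ _ HL Hnu Htau0 Hc HVc Hlevel HVbound
             eps E (lam eps) _ _ psi dpsi ltac:(lra) Hqc Hqs
             ltac:(apply Hlamsmall; lra) Hpsi y Hy HE).
  - exact (perturbed_flux_left L nu tau0 c MV MdV _ _ HL Hnu Htau0 Hc HVc Hlevel0 HVbound
             eps E _ _ psi dpsi ltac:(lra) Hqc Hqs Hpsi HE).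
  - exact (perturbed_flux_right L nu tau0 c MV MdV _ _ HL Hnu Htau0 Hc HVc HlevelL HVbound
             eps E _ _ psi dpsi ltac:(lra) Hqc Hqs Hpsi HE).
Qed.
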